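(* Let $n\geq 2$. For every $1\leq k\leq \lceil n/2\rceil-1$, the complete graph $K_n$ is not strong $k$-cop-win. Moreover, $K_n$ is strong $\lceil n/2\rceil$-cop-win and $\lim_{m\to\infty}\mathrm{capt}_{\lceil n/2\rceil}(K_n,m)=1$.
   Context: All graphs are finite, simple, connected and reflexive (a player may stay in place). The game of $k$ cops and $m$ robbers on $G$: in round 0 the cops first choose starting vertices, then the robbers choose theirs. In each round $i\geq 1$, all $k$ cops move (each to an adjacent vertex or staying), then all $m$ robbers move likewise. Several players may occupy the same vertex. Whenever a cop and some robbers occupy the same vertex, those robbers are captured and take no further part in the game. Both sides have full information. The cops win if all robbers are captured after finitely many rounds. $G$ is $k$-cop-win if $k$ cops can always win against one robber. For a $k$-cop-win graph $G$, $\mathrm{capt}_k(G,m)$ is the index of the round in which the last robber is captured when $k$ cops play to minimize this index and $m$ robbers play to maximize it. $G$ is strong $k$-cop-win if $\lim_{m\to\infty}\mathrm{capt}_k(G,m)$ exists (and is finite). *)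

From mathcomp Require Import all_boot.
From Stdlib Require Import Reals ClassicalEpsilon.
Set Implicit Arguments. Unset Strict Implicit. Unset Printing Implicit Defensive.

(* A graph is given by a finite vertex type V and an adjacency relation
   [adj : rel V]; [adj x y] means a player at x may move to y in one step
   (graphs are reflexive, so staying put corresponds to [adj x x]). *)

(* Positions of k cops, and state of m robbers (None = captured). *)
Definition copPos (V : finType) (k : nat) := {ffun 'I_k -> V}.
Definition robState (V : finType) (m : nat) := {ffun 'I_m -> option V}.

Definition occupied (V : finType) k (c : copPos V k) (v : V) : Prop :=
  exists i, c i = v.

Definition all_captured (V : finType) m (R : robState V m) : Prop :=
  forall j, R j = None.

Definition cop_move (V : finType) (adj : rel V) k (c c' : copPos V k) : Prop :=
  forall i, adj (c i) (c' i).

Definition survives (V : finType) k m (c' : copPos V k) (R : robState V m)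
  (j : 'I_m) (v : V) : Prop :=
  R j = Some v /\ ~ occupied c' v.

(* a legal move of all surviving robbers (captured robbers' entries ignored) *)
Definition rob_move (V : finType) (adj : rel V) k m (c' : copPos V k)
  (R : robState V m) (r' : {ffun 'I_m -> V}) : Prop :=
  forall j v, survives c' R j v -> adj v (r' j).

Definition rob_step (V : finType) k m (c' : copPos V k) (R : robState V m)
  (r' : {ffun 'I_m -> V}) : robState V m :=
  [ffun j => match R j with
             | Some v =>
                 if excluded_middle_informative (occupied c' v) then None
                 else if excluded_middle_informative (occupied c' (r' j))
                      then None else Some (r' j)
             | None => None
             end].

(* [guar adj t c R]: from the state at the end of some round (cops at c,
   robbers R), the cops can guarantee that all robbers are captured within
   at most t further rounds, whatever the robbers do. *)
Fixpoint guar (V : finType) (adj : rel V) k m (t : nat) (c : copPos V k)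
  (R : robState V m) : Prop :=
  match t with
  | 0 => all_captured R
  | t'.+1 => all_captured R \/
      exists c', cop_move adj c c' /\
        forall r', rob_move adj c' R r' -> guar adj t' c' (rob_step c' R r')
  end.

(* round 0: cops place, then robbers place; robbers placed on a cop are
   captured *)
Definition init_state (V : finType) k m (c0 : copPos V k)
  (r0 : {ffun 'I_m -> V}) : robState V m :=
  [ffun j => if excluded_middle_informative (occupied c0 (r0 j)) then None
             else Some (r0 j)].

Definition capt_le (V : finType) (adj : rel V) (k m t : nat) : Prop :=
  exists c0 : copPos V k, forall r0 : {ffun 'I_m -> V},
    guar adj t c0 (init_state c0 r0).

Definition cop_win (V : finType) (adj : rel V) (k : nat) : Prop :=
  exists t, capt_le adj k 1 t.

(* capt_k(G,m): the minimax capture round = least t with capt_le t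
   (chosen classically; meaningful whenever such t exists) *)
Definition capt (V : finType) (adj : rel V) (k m : nat) : nat :=
  epsilon (inhabits 0%N)
    (fun t => capt_le adj k m t /\ forall t', capt_le adj k m t' -> (t <= t')%N).

Definition capt_limit_is (V : finType) (adj : rel V) (k : nat) (L : R) : Prop :=
  Un_cv (fun m => INR (capt adj k m)) L.

Definition strong_cop_win (V : finType) (adj : rel V) (k : nat) : Prop :=
  cop_win adj k /\ exists L : R, capt_limit_is adj k L.

Definition Kn_adj (n : nat) : rel 'I_n := fun _ _ => true.
Arguments Kn_adj : clear implicits.

(* If 2k+1 <= n then after any move of k cops at least k+1 vertices of K_n are
   free.  Robbers grouped on k+1 distinct vertices therefore always have a
   group left untouched, which they split evenly over k+1 free vertices; so
   (k+1)^(t+1) robbers survive t rounds, capt_k(K_n, m) is unbounded in m and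
   has no limit.  With ceil(n/2) cops, two placements cover all of K_n, so
   every robber is caught in round 1, while round 0 never suffices because
   some vertex is free. *)
From Stdlib Require Import Reals ClassicalEpsilon Lra.
From mathcomp Require Import all_boot zify.
Set Implicit Arguments. Unset Strict Implicit.

Section Occupation.
Variable V : finType.

Lemma occupiedE k (c : copPos V k) v : occupied c v <-> v \in [set c i | i in 'I_k].
Proof. by split => [[i <-]|/imsetP [i _ ->]]; [exact: imset_f | exists i]. Qed.

Lemma card_occupied k (c : copPos V k) : (#|[set c i | i in 'I_k]| <= k)%N.
Proof. by apply: leq_trans (leq_imset_card _ _) _; rewrite card_ord. Qed.

Lemma exists_unoccupied k (c : copPos V k) (A : {set V}) :
  (k < #|A|)%N -> exists2 v, v \in A & ~ occupied c v.
Proof.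
move=> kA; have /subsetPn [v vA vNc] : ~~ (A \subset [set c i | i in 'I_k]).
  apply: contraTN kA => /subset_leq_card AB; rewrite -leqNgt.
  exact: leq_trans AB (card_occupied c).
by exists v => // /occupiedE; apply/negP.
Qed.

Lemma exists_unoccupied_family k (c : copPos V k) : (2 * k + 1 <= #|V|)%N ->
  exists g : 'I_k.+1 -> V, injective g /\ forall i, ~ occupied c (g i).
Proof.
move=> kV; set A := ~: [set c i | i in 'I_k].
have kA : (k.+1 <= #|A|)%N.
  by have := cardsC [set c i | i in 'I_k]; rewrite -/A; have := card_occupied c; lia.
exists (fun i => enum_val (A := A) (widen_ord kA i)); split.
  by move=> i j /enum_val_inj /(congr1 val) /= ij; apply: val_inj.
move=> i /occupiedE; have := enum_valP (widen_ord kA i); by rewrite inE => /negP.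
Qed.

Lemma rob_step_captured k m (c' : copPos V k) (R : robState V m)
  (r' : {ffun 'I_m -> V}) j :
  (forall v, R j = Some v -> occupied c' v) -> rob_step c' R r' j = None.
Proof.
rewrite ffunE; case: (R j) => [v /(_ v erefl) cv|//].
by case: excluded_middle_informative.
Qed.

Lemma rob_step_free k m (c' : copPos V k) (R : robState V m)
  (r' : {ffun 'I_m -> V}) j v :
  R j = Some v -> ~ occupied c' v -> ~ occupied c' (r' j) ->
  rob_step c' R r' j = Some (r' j).
Proof.
move=> Rj vN rN; rewrite ffunE Rj.
by case: (excluded_middle_informative (occupied c' v));
  case: (excluded_middle_informative (occupied c' (r' j))).
Qed.

Lemma init_state_free k m (c0 : copPos V k) (r0 : {ffun 'I_m -> V}) j :
  ~ occupied c0 (r0 j) -> init_state c0 r0 j = Some (r0 j).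
Proof. by move=> rN; rewrite ffunE; case: excluded_middle_informative. Qed.

End Occupation.

Section CaptureTime.
Variables (V : finType) (adj : rel V) (k m : nat).

Lemma capt_min t0 : capt_le adj k m t0 ->
  capt_le adj k m (capt adj k m) /\ forall t, capt_le adj k m t -> (capt adj k m <= t)%N.
Proof.
move=> ht0; rewrite /capt; apply epsilon_spec.
pose P t := if excluded_middle_informative (capt_le adj k m t) then true else false.
have PE t : P t = true <-> capt_le adj k m t by rewrite /P; case: excluded_middle_informative.
have [|t /PE Pt tmin] := ex_minnP (P := P); first by exists t0; apply/PE.
by exists t; split=> // t' /PE; apply: tmin.
Qed.

Lemma capt_eq t : capt_le adj k m t ->
  (forall t', (t' < t)%N -> ~ capt_le adj k m t') -> capt adj k m = t.
Proof.
move=> ht faster; have [hcapt captmin] := capt_min ht.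
apply/eqP; rewrite eqn_leq captmin //= leqNgt.
by apply/negP => /faster.
Qed.

Lemma capt_gt t t0 : capt_le adj k m t0 ->
  (forall t', (t' <= t)%N -> ~ capt_le adj k m t') -> (t < capt adj k m)%N.
Proof.
move=> ht0 slower; have [hcapt _] := capt_min ht0.
by rewrite ltnNge; apply/negP => /slower.
Qed.

Lemma not_capt_le0 : (k < #|V|)%N -> (0 < m)%N -> ~ capt_le adj k m 0.
Proof.
move=> kV m_gt0 [c0 win].
have [v _ vN] := @exists_unoccupied _ _ c0 [set: V] ltac:(by rewrite cardsT).
by move: (win [ffun _ => v] (Ordinal m_gt0)); rewrite /= init_state_free ?ffunE.
Qed.

End CaptureTime.

Section CompleteGraph.
Variables (V : finType) (adj : rel V).
Hypothesis adj_complete : forall x y, adj x y.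

(* The robbers at g i are labelled injectively by t-tuples; in the next round
   a surviving group moves to the vertex indexed by the head of the label and
   keeps its tail. *)
Definition spread k m t (R : robState V m) : Prop :=
  exists g : 'I_k.+1 -> V, injective g /\
  exists h : 'I_k.+1 -> t.-tuple 'I_k.+1 -> 'I_m,
    (forall i, injective (h i)) /\ forall i a, R (h i a) = Some (g i).

Lemma spread_not_guar k m t (c : copPos V k) (R : robState V m) :
  (2 * k + 1 <= #|V|)%N -> spread k t R -> ~ guar adj t c R.
Proof.
move=> kV; elim: t c R => [|t IH] c R [g [gi [h [hi hR]]]] /=.
  by move/(_ (h ord0 [tuple])); rewrite hR.
case=> [captured | [c' [_ respond]]].
  by move: (captured (h ord0 [tuple ord0 | i < t.+1])); rewrite hR.
have [_ /imsetP [i0 _ ->] g0N] := @exists_unoccupied _ _ c' [set g i | i in 'I_k.+1]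
  ltac:(by rewrite card_imset // card_ord).
have [g' [g'i g'N]] := exists_unoccupied_family c' kV.
pose r' : {ffun 'I_m -> V} :=
  [ffun j => if [pick a | h i0 a == j] is Some a then g' (thead a) else g' ord0].
have r'E (i : 'I_k.+1) (b : t.-tuple 'I_k.+1) : r' (h i0 [tuple of i :: b]) = g' i.
  rewrite ffunE; case: pickP => [a /eqP /hi -> | noa]; first by rewrite theadE.
  by move: (noa [tuple of i :: b]); rewrite eqxx.
apply: (IH c' (rob_step c' R r')); last by apply: respond => j v _; apply: adj_complete.
exists g'; split => //.
exists (fun (i : 'I_k.+1) (b : t.-tuple 'I_k.+1) => h i0 [tuple of i :: b]); split.
  by move=> i b b' /hi /(congr1 val) [bb']; apply: val_inj.
by move=> i b; rewrite (rob_step_free (v := g i0)) ?hR ?r'E.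
Qed.

Lemma spread_init k m t (c0 : copPos V k) :
  (2 * k + 1 <= #|V|)%N -> (k.+1 ^ t.+1 <= m)%N ->
  exists r0 : {ffun 'I_m -> V}, spread k t (init_state c0 r0).
Proof.
move=> kV km; have [g [gi gN]] := exists_unoccupied_family c0 kV.
pose P := ('I_k.+1 * t.-tuple 'I_k.+1)%type.
have Pm : (#|{: P}| <= m)%N by rewrite card_prod card_tuple !card_ord -expnS.
pose label p : 'I_m := widen_ord Pm (enum_rank p).
have label_inj : injective label.
  by move=> p q /(congr1 val) /= pq; apply/enum_rank_inj/val_inj.
pose r0 : {ffun 'I_m -> V} :=
  [ffun j => if [pick p | label p == j] is Some p then g p.1 else g ord0].
have r0E i a : r0 (label (i, a)) = g i.
  rewrite ffunE; case: pickP => [p /eqP /label_inj -> // | nop].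
  by move: (nop (i, a)); rewrite eqxx.
exists r0, g; split => //; exists (fun i a => label (i, a)); split.
  by move=> i a b /label_inj [].
by move=> i a; rewrite init_state_free r0E.
Qed.

Lemma not_capt_le_many_robbers k m t :
  (2 * k + 1 <= #|V|)%N -> (k.+1 ^ t.+1 <= m)%N -> ~ capt_le adj k m t.
Proof.
move=> kV km [c0 win]; have [r0 spread_r0] := spread_init c0 kV km.
exact: spread_not_guar kV spread_r0 (win r0).
Qed.

Lemma guar_free_robbers k m t (c : copPos V k) (R : robState V m) : (0 < k)%N ->
  (#|[set j | R j != None]| <= t)%N -> guar adj t c R.
Proof.
move=> k_gt0; elim: t c R => [|t IH] c R /=.
  by rewrite leqn0 => /eqP /card0_eq free j; move: (free j); rewrite !inE => /negbFE /eqP.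
move=> freet; case: (pickP (fun j => R j != None)) => [j | none]; last first.
  by left => j; move/negbFE: (none j) => /eqP.
case Rj: (R j) => [v|] // _; right.
exists [ffun _ => v]; split => [i|r' _]; first exact: adj_complete.
apply: IH; apply: leq_trans (subset_leq_card (B := [set j0 | R j0 != None] :\ j) _) _.
  apply/subsetP => j0; rewrite !inE.
  case Rj0: (R j0) => [w|]; last by rewrite rob_step_captured // Rj0.
  case: (eqVneq j0 j) => [-> | //]; rewrite rob_step_captured //.
  by rewrite Rj => _ [<-]; exists (Ordinal k_gt0); rewrite ffunE.
by have := cardsD1 j [set j0 | R j0 != None]; rewrite inE Rj /=; lia.
Qed.

Lemma capt_le_one_per_round k m (v0 : V) : (0 < k)%N -> capt_le adj k m m.
Proof.
move=> k_gt0; exists [ffun _ => v0] => r0; apply: guar_free_robbers => //.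
by apply: leq_trans (max_card _) _; rewrite card_ord.
Qed.

Lemma capt_le_cover k m (c0 c1 : copPos V k) :
  (forall v, occupied c0 v \/ occupied c1 v) -> capt_le adj k m 1.
Proof.
move=> cover; exists c0 => r0 /=; right; exists c1.
split => [i|r' _ j]; first exact: adj_complete.
rewrite rob_step_captured // ffunE => v.
case: excluded_middle_informative => // r0N [<-].
by case: (cover (r0 j)).
Qed.

Lemma capt_gt_many_robbers k m t (v0 : V) : (0 < k)%N ->
  (2 * k + 1 <= #|V|)%N -> (k.+1 ^ t.+1 <= m)%N -> (t < capt adj k m)%N.
Proof.
move=> k_gt0 kV km; apply: (capt_gt (capt_le_one_per_round m v0 k_gt0)) => t' t't.
apply: not_capt_le_many_robbers kV (leq_trans _ km).
by rewrite leq_pexp2l.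
Qed.

End CompleteGraph.

Lemma not_Un_cv_unbounded (u : nat -> nat) (L : R) :
  (forall t N, exists2 m, (N <= m)%N & (t < u m)%N) -> ~ Un_cv (fun m => INR (u m)) L.
Proof.
move=> unbounded cvL; have [N closeN] := cvL _ Rlt_0_1.
have [t Lt] := INR_unbounded L; have [m Nm tm] := unbounded t N.
have /Rabs_def2 [close _] := closeN m (elimT leP Nm).
have : Rle (INR t.+1) (INR (u m)) by apply/le_INR/leP.
by rewrite S_INR; lra.
Qed.

Lemma Kn_adj_complete n : forall x y, Kn_adj n x y.
Proof. by []. Qed.

Lemma uphalf_double_leq n : (n <= 2 * uphalf n)%N.
Proof. by rewrite uphalf_half; have := odd_double_half n; lia. Qed.

Lemma Kn_halves_cover n : (0 < n)%N ->
  exists c0 c1 : copPos 'I_n (uphalf n), forall v, occupied c0 v \/ occupied c1 v.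
Proof.
case: n => [//|n] _; have := uphalf_double_leq n.+1; set k := uphalf n.+1 => nk.
exists [ffun i : 'I_k => inord i], [ffun i : 'I_k => inord (i + k)] => v.
case: (ltnP v k) => vk; [left | right].
  by exists (Ordinal vk); apply: val_inj; rewrite ffunE /= inordK.
have vk' : (v - k < k)%N by have := ltn_ord v; lia.
by exists (Ordinal vk'); apply: val_inj; rewrite ffunE /= subnK ?inordK.
Qed.

Lemma capt_Kn_uphalf n m : (2 <= n)%N -> (0 < m)%N -> capt (Kn_adj n) (uphalf n) m = 1%N.
Proof.
move=> n2 m_gt0; have [c0 [c1 cover]] := Kn_halves_cover (ltnW n2).
apply: capt_eq (capt_le_cover (@Kn_adj_complete n) m cover) _ => -[_ | //].
apply: not_capt_le0 _ m_gt0.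
by rewrite card_ord uphalf_half; have := odd_double_half n; lia.
Qed.

Theorem mainTheorem15 (n : nat) (hn : (2 <= n)%N) :
  (forall k : nat, (1 <= k)%N -> (k <= uphalf n - 1)%N ->
     ~ strong_cop_win (Kn_adj n) k) /\
  strong_cop_win (Kn_adj n) (uphalf n) /\
  capt_limit_is (Kn_adj n) (uphalf n) (INR 1).
Proof.
have n_gt0 : (0 < n)%N := ltnW hn.
have lim : capt_limit_is (Kn_adj n) (uphalf n) (INR 1).
  move=> eps eps_gt0; exists 1%coq_nat => m /leP m_gt0.
  by rewrite capt_Kn_uphalf // /R_dist Rminus_diag Rabs_R0.
split; last first.
  split=> //; split; last by exists (INR 1).
  have [c0 [c1 cover]] := Kn_halves_cover n_gt0.
  by exists 1%N; apply: (capt_le_cover (@Kn_adj_complete n) 1 cover).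
move=> k k_gt0 k_small [_ [L cvL]]; apply: not_Un_cv_unbounded cvL => t N.
have kn : (2 * k + 1 <= n)%N by have := uphalf_double_leq n; lia.
exists (N + expn k.+1 t.+1)%N; first exact: leq_addr.
apply: (capt_gt_many_robbers (@Kn_adj_complete n) (Ordinal n_gt0) k_gt0).
  by rewrite card_ord.
exact: leq_addl.
Qed.
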